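(* Let $\mathcal{F}$ be a fusion ring with structure constants $(N_{i,j}^k)$, index $1$ being the unit. Suppose there are indices $k_0\neq k_1$ such that $N_{i,j}^{k_0}\neq0$ and $N_{i,j}^{k_1}\neq0$ for all indices $i,j\neq1$. Then $\mathcal{F}$ passes the one spectrum criterion, i.e. there are no indices $i_0,i_1,\dots,i_9$ satisfying all of the following: (1) $N_{i_4,i_1}^{i_6},\ N_{i_5,i_4}^{i_2},\ N_{i_5,i_6}^{i_3},\ N_{i_7,i_9}^{i_1},\ N_{i_2,i_7}^{i_8},\ N_{i_8,i_9}^{i_3}\neq0$; (2) $\sum_kN_{i_4,i_7}^kN_{i_5^*,i_8}^kN_{i_6,i_9^*}^k=1$; (3) $N_{i_4,i_7}^{i_0}=N_{i_5^*,i_8}^{i_0}=N_{i_6,i_9^*}^{i_0}=1$; (4) $N_{i_2,i_1}^{i_3}=0$; (5) $\sum_kN_{i_5,i_4}^kN_{i_8,i_7^*}^k=1$ or $\sum_kN_{i_2,i_4^*}^kN_{i_8,i_0^*}^k=1$ or $\sum_kN_{i_5^*,i_2}^kN_{i_0,i_7^*}^k=1$; (6) $\sum_kN_{i_5,i_0}^kN_{i_3,i_9^*}^k=1$ or $\sum_kN_{i_8,i_0^*}^kN_{i_3,i_6^*}^k=1$ or $\sum_kN_{i_5^*,i_8}^kN_{i_6,i_9^*}^k=1$; (7) $\sum_kN_{i_4,i_7}^kN_{i_6,i_9^*}^k=1$ or $\sum_kN_{i_0,i_7^*}^kN_{i_6,i_1^*}^k=1$ or $\sum_kN_{i_4^*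,i_0}^kN_{i_1,i_9^*}^k=1$.
   Context: A fusion ring is a ring which is a free $\mathbb{Z}$-module with finite basis $\{b_1,\dots,b_r\}$, $b_ib_j=\sum_kN_{i,j}^kb_k$, $N_{i,j}^k\in\mathbb{Z}_{\ge0}$, associative, unit $b_1$, duality $i\mapsto i^*$ with $N_{i,k}^1=N_{k,i}^1=\delta_{i^*,k}$, and Frobenius reciprocity $N_{i,j}^k=N_{i^*,k}^j=N_{k,j^*}^i$. (If indices as in (1)–(7) exist, the fusion ring admits no categorification; ''passing the one spectrum criterion'' means no such indices exist.) *)

From mathcomp Require Import all_boot.
Set Implicit Arguments. Unset Strict Implicit. Unset Printing Implicit Defensive.

(* A fusion ring of rank r: basis indexed by 'I_r, structure constants
   N i j k = N_{i,j}^k (nonnegative integers), unit index [one],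
   duality [dual] (i |-> i^* ). *)
Definition is_fusion_ring (r : nat) (N : 'I_r -> 'I_r -> 'I_r -> nat)
    (one : 'I_r) (dual : 'I_r -> 'I_r) : Prop :=
  (* associativity of b_i b_j = sum_k N_{i,j}^k b_k *)
  [/\ (forall i j k l : 'I_r,
        \sum_(m < r) N i j m * N m k l = \sum_(m < r) N j k m * N i m l),
      (forall i j : 'I_r, N one i j = (i == j) /\ N i one j = (i == j)),
      (forall i k : 'I_r, N i k one = (dual i == k) /\ N k i one = (dual i == k))
    &
      (forall i j k : 'I_r,
        N i j k = N (dual i) k j /\ N i j k = N k (dual j) i)].

Definition sum2 r (N : 'I_r -> 'I_r -> 'I_r -> nat) (a b c d : 'I_r) : nat :=
  \sum_(k < r) N a b k * N c d k.

Definition sum3 r (N : 'I_r -> 'I_r -> 'I_r -> nat) (a b c d e f : 'I_r) : nat :=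
  \sum_(k < r) N a b k * N c d k * N e f k.

Definition one_spectrum_witness r (N : 'I_r -> 'I_r -> 'I_r -> nat)
    (dual : 'I_r -> 'I_r) (i0 i1 i2 i3 i4 i5 i6 i7 i8 i9 : 'I_r) : Prop :=
      (N i4 i1 i6 <> 0 /\ N i5 i4 i2 <> 0 /\ N i5 i6 i3 <> 0 /\
          N i7 i9 i1 <> 0 /\ N i2 i7 i8 <> 0 /\ N i8 i9 i3 <> 0) /\
      sum3 N i4 i7 (dual i5) i8 i6 (dual i9) = 1 /\
      (N i4 i7 i0 = 1 /\ N (dual i5) i8 i0 = 1 /\ N i6 (dual i9) i0 = 1) /\
      N i2 i1 i3 = 0 /\
      [\/ sum2 N i5 i4 i8 (dual i7) = 1,
          sum2 N i2 (dual i4) i8 (dual i0) = 1 |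
          sum2 N (dual i5) i2 i0 (dual i7) = 1] /\
      [\/ sum2 N i5 i0 i3 (dual i9) = 1,
          sum2 N i8 (dual i0) i3 (dual i6) = 1 |
          sum2 N (dual i5) i8 i6 (dual i9) = 1] /\
      [\/ sum2 N i4 i7 i6 (dual i9) = 1,
          sum2 N i0 (dual i7) i6 (dual i1) = 1 |
          sum2 N (dual i4) i0 i1 (dual i9) = 1].

Definition passes_one_spectrum r (N : 'I_r -> 'I_r -> 'I_r -> nat)
    (dual : 'I_r -> 'I_r) : Prop :=
  ~ exists i0 i1 i2 i3 i4 i5 i6 i7 i8 i9 : 'I_r,
      one_spectrum_witness N dual i0 i1 i2 i3 i4 i5 i6 i7 i8 i9.

(* If none of the six basis elements i4, i7, i5^*, i8, i6, i9^* in condition (2)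
   is the unit, then both k0 and k1 contribute to the sum in (2), which is
   therefore at least 2.  If one of them is the unit, the unit axiom collapses
   two of the nonzero constants of (1) onto each other, and (possibly after a
   Frobenius reciprocity) one of them becomes N_{i2,i1}^{i3}, contradicting (4). *)

From mathcomp Require Import all_boot.
From mathcomp Require Import zify.

Set Implicit Arguments.
Unset Strict Implicit.
Unset Printing Implicit Defensive.

Lemma sum_gt1_of_two_pos (I : finType) (F : I -> nat) (k0 k1 : I) :
  k0 != k1 -> 0 < F k0 -> 0 < F k1 -> 1 < \sum_k F k.
Proof.
move=> k01 F0 F1; rewrite (bigD1 k0) //= (bigD1 k1) /=; last by rewrite eq_sym.
lia.
Qed.

Section FusionRing.

Variables (r : nat) (N : 'I_r -> 'I_r -> 'I_r -> nat).
Variables (one : 'I_r) (dual : 'I_r -> 'I_r).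
Hypothesis fusionN : is_fusion_ring N one dual.

Lemma unitl_neq0_eq i j : N one i j <> 0 -> i = j.
Proof. by case: fusionN => _ unitN _ _; rewrite (proj1 (unitN i j)); case: eqP. Qed.

Lemma unitr_neq0_eq i j : N i one j <> 0 -> i = j.
Proof. by case: fusionN => _ unitN _ _; rewrite (proj2 (unitN i j)); case: eqP. Qed.

Lemma to_unit_neq0_eq i k : N i k one <> 0 -> k = dual i.
Proof. by case: fusionN => _ _ dualN _; rewrite (proj1 (dualN i k)); case: eqP. Qed.

Lemma dual_eq_one i : dual i = one -> i = one.
Proof.
case: fusionN => _ unitN dualN _ di1; apply/eqP.
by move: (proj2 (unitN i one)); rewrite (proj1 (dualN i one)) di1 eqxx; case: eqP.
Qed.

Lemma frobeniusl i j k : N i j k = N (dual i) k j.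
Proof. by case: fusionN => _ _ _ /(_ i j k) []. Qed.

Lemma frobeniusr i j k : N i j k = N k (dual j) i.
Proof. by case: fusionN => _ _ _ /(_ i j k) []. Qed.

Lemma witness_neq_one i1 i2 i3 i4 i5 i6 i7 i8 i9 :
  N i4 i1 i6 <> 0 -> N i5 i4 i2 <> 0 -> N i5 i6 i3 <> 0 ->
  N i7 i9 i1 <> 0 -> N i2 i7 i8 <> 0 -> N i8 i9 i3 <> 0 ->
  N i2 i1 i3 = 0 ->
  [/\ i4 <> one, i5 <> one & i6 <> one] /\ [/\ i7 <> one, i8 <> one & i9 <> one].
Proof.
move=> N416 N542 N563 N791 N278 N893 N213; split; split=> e1.
- rewrite e1 in N416 N542.
  have e16 := unitl_neq0_eq N416; have e52 := unitr_neq0_eq N542; subst.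
  exact: N563.
- rewrite e1 in N542 N563.
  have e42 := unitl_neq0_eq N542; have e63 := unitl_neq0_eq N563; subst.
  exact: N416.
- rewrite e1 in N416 N563.
  have e14 := to_unit_neq0_eq N416; have e53 := unitr_neq0_eq N563; subst.
  by apply: N542; rewrite frobeniusr.
- rewrite e1 in N791 N278.
  have e91 := unitl_neq0_eq N791; have e28 := unitr_neq0_eq N278; subst.
  exact: N893.
- rewrite e1 in N278 N893.
  have e72 := to_unit_neq0_eq N278; have e93 := unitl_neq0_eq N893; subst.
  by apply: N791; rewrite -frobeniusl.
- rewrite e1 in N791 N893.
  have e71 := unitr_neq0_eq N791; have e83 := unitr_neq0_eq N893; subst.
  exact: N278.
Qed.

End FusionRing.

Lemma sum3_gt1 r (N : 'I_r -> 'I_r -> 'I_r -> nat) (one k0 k1 : 'I_r)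
    (a b c d e f : 'I_r) :
  k0 <> k1 ->
  (forall i j : 'I_r, i <> one -> j <> one -> N i j k0 <> 0 /\ N i j k1 <> 0) ->
  a <> one -> b <> one -> c <> one -> d <> one -> e <> one -> f <> one ->
  1 < sum3 N a b c d e f.
Proof.
move=> k01 supp a1 b1 c1 d1 e1 f1; apply: (@sum_gt1_of_two_pos _ _ k0 k1).
  exact/eqP.
all: move: (supp _ _ a1 b1) (supp _ _ c1 d1) (supp _ _ e1 f1).
all: rewrite !muln_gt0; lia.
Qed.

Theorem lemma7p19 (r : nat) (N : 'I_r -> 'I_r -> 'I_r -> nat)
    (one : 'I_r) (dual : 'I_r -> 'I_r) :
  is_fusion_ring N one dual ->
  (exists k0 k1 : 'I_r, k0 <> k1 /\
     forall i j : 'I_r, i <> one -> j <> one ->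
       N i j k0 <> 0 /\ N i j k1 <> 0) ->
  passes_one_spectrum N dual.
Proof.
move=> fusionN [k0 [k1 [k01 supp]]].
move=> [i0 [i1 [i2 [i3 [i4 [i5 [i6 [i7 [i8 [i9 W]]]]]]]]]].
move: W => [[N416 [N542 [N563 [N791 [N278 N893]]]]] [sum3_eq1 [_ [N213 _]]]].
have [[i4n1 i5n1 i6n1] [i7n1 i8n1 i9n1]] :=
  witness_neq_one fusionN N416 N542 N563 N791 N278 N893 N213.
have i5dn1 : dual i5 <> one by move/(dual_eq_one fusionN).
have i9dn1 : dual i9 <> one by move/(dual_eq_one fusionN).
by have := sum3_gt1 k01 supp i4n1 i7n1 i5dn1 i8n1 i6n1 i9dn1; rewrite sum3_eq1.
Qed.
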